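(* The category of cubes $\overline{\square}$ generated by the maps $\delta_i^\alpha$, $\sigma_i$ and $\gamma_i$ is not shell-complete. In other terms, the inclusion $\overline{\square}\subset\widehat{\square}$ is strict.
   Context: $[0]=\{()\}$, $[n]=\{0,1\}^n$ ($n\ge1$) with the product order; ${\rm PoSet}$ is posets with strictly increasing maps. Face maps $\delta_i^\alpha:[n-1]\to[n]$ insert $\alpha\in\{0,1\}$ at position $i$. For $n\ge2$, $1\le i\le n-1$: the symmetry map $\sigma_i:[n]\to[n]$ swaps coordinates $i$ and $i+1$, and the transverse degeneracy $\gamma_i:[n]\to[n]$ is $(\epsilon_1,\dots,\epsilon_n)\mapsto(\epsilon_1,\dots,\epsilon_{i-1},\max(\epsilon_i,\epsilon_{i+1}),\min(\epsilon_i,\epsilon_{i+1}),\epsilon_{i+2},\dots,\epsilon_n)$. $\overline\square$ is the subcategory of ${\rm PoSet}$ with objects $[n]$, $n\ge0$, generated by all $\delta_i^\alpha,\sigma_i,\gamma_i$. A map is adjacency-preserving if strictly increasing and it sends pairs at Hamming distance $1$ to pairs at Hamming distance $1$; $\widehat\square$ is the category with objects $[n]$ and all adjacency-preserving maps. A category of cubes is a subcategory of ${\rm PoSet}$ with objects $[n]$ containing all face maps and consisting of adjacency-preserving maps. For such $\mathcal A$, with $\mathcal A[p]=\mathcal A(-,[p])$ and $\mathrm{cosk}_1^{\mathcal A}$ the right adjoint of truncation of presheaves on $\mathcal A$ to the full subcategory on $[0],[1]$, $\mathcal A$ is shell-complete if $\mathcal A[p]\to\mathrm{cosk}_1^{\mathcal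 A}(\mathcal A[p]_{\le1})$ is an isomorphism for all $p\ge2$. (The paper shows $\widehat\square$ is the unique shell-complete category of cubes.) *)

From mathcomp Require Import all_boot.
Set Implicit Arguments. Unset Strict Implicit. Unset Printing Implicit Defensive.

(* The poset [n] = {0,1}^n, as finite functions 'I_n -> bool; [0] has one point. *)
Definition cube (n : nat) := {ffun 'I_n -> bool}.
(* Maps [m] -> [n] (as finite functions, so equality is decidable/extensional). *)
Definition hom (m n : nat) := {ffun cube m -> cube n}.

(* k-th coordinate (0-based), default false out of range *)
Definition coord n (x : cube n) (k : nat) : bool :=
  if @insub nat (fun k => k < n) 'I_n k is Some j then x j else false.
Definition mkcube n (F : nat -> bool) : cube n := [ffun j : 'I_n => F (val j)].

Definition cube_le n (x y : cube n) : bool := [forall j, x j ==> y j].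
Definition cube_lt n (x y : cube n) : bool := (x != y) && cube_le x y.
Definition strictly_increasing m n (f : hom m n) : Prop :=
  forall x y, cube_lt x y -> cube_lt (f x) (f y).
Definition hamming n (x y : cube n) : nat := #|[set j | x j != y j]|.
Definition adjacency_preserving m n (f : hom m n) : Prop :=
  strictly_increasing f /\
  (forall x y, hamming x y = 1 -> hamming (f x) (f y) = 1).

Definition idh n : hom n n := [ffun x => x].
Definition comp l m n (g : hom m n) (f : hom l m) : hom l n := [ffun x => g (f x)].

(* Face map delta_{i+1}^a : [n] -> [n+1] (0-based position i, 0 <= i <= n):
   inserts a at position i. *)
Definition delta (n i : nat) (a : bool) : hom n n.+1 :=
  [ffun x => mkcube n.+1 (fun k =>
     if k < i then coord x k else if k == i then a else coord x k.-1)].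
(* Symmetry sigma_{k+1} : [n] -> [n] (0-based, k+1 < n): swaps coords k, k+1. *)
Definition sigma (n k : nat) : hom n n :=
  [ffun x => mkcube n (fun j =>
     if j == k then coord x k.+1 else if j == k.+1 then coord x k else coord x j)].
(* Transverse degeneracy gamma_{k+1} : [n] -> [n] (0-based, k+1 < n). *)
Definition gamma (n k : nat) : hom n n :=
  [ffun x => mkcube n (fun j =>
     if j == k then coord x k || coord x k.+1
     else if j == k.+1 then coord x k && coord x k.+1 else coord x j)].

Inductive cubebar : forall m n : nat, hom m n -> Prop :=
| cb_id n : cubebar (idh n)
| cb_comp l m n (g : hom m n) (f : hom l m) :
    cubebar g -> cubebar f -> cubebar (comp g f)
| cb_delta n i a : i <= n -> cubebar (delta n i a)
| cb_sigma n k : k.+1 < n -> cubebar (sigma n k)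
| cb_gamma n k : k.+1 < n -> cubebar (gamma n k).

(* A morphism g : A[n]_{<=1} -> A[p]_{<=1} of presheaves on the full subcategory
   on [0],[1] is given by components g k (k = 0, 1), natural w.r.t. all maps of A
   between [0],[1].  (Only values on A-maps matter.) *)
Definition shell_transf (A : forall m n, hom m n -> Prop) (n p : nat)
    (g : forall k, hom k n -> hom k p) : Prop :=
  (forall k (u : hom k n), k <= 1 -> A k n u -> A k p (g k u)) /\
  (forall j k (e : hom j k) (u : hom k n), j <= 1 -> k <= 1 ->
     A j k e -> A k n u -> g j (comp u e) = comp (g k u) e).

(* A[p] -> cosk_1(A[p]_{<=1}) is an isomorphism: at every level [n], the map
   f |-> (u |-> f o u) from A([n],[p]) to shell morphisms is bijective. *)
Definition shell_complete (A : forall m n, hom m n -> Prop) : Prop :=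
  forall p n, 2 <= p ->
    (forall f f' : hom n p, A n p f -> A n p f' ->
       (forall k (u : hom k n), k <= 1 -> A k n u -> comp f u = comp f' u) ->
       f = f') /\
    (forall g : forall k, hom k n -> hom k p, @shell_transf A n p g ->
       exists2 f : hom n p, A n p f &
         forall k (u : hom k n), k <= 1 -> A k n u -> g k u = comp f u).

From Pilot Require Import Defs.
From mathcomp Require Import all_boot zify.
From Stdlib Require Import PArith MSetPositive.
(* Re-imported so that [comp] means [Defs.comp], not ssrfun's composition. *)
Import Defs.
Set Implicit Arguments. Unset Strict Implicit. Unset Printing Implicit Defensive.

(* The counterexample is f0 : [4] -> [4],
     x |-> (x0 x1 x2 x3, x0 x1 + x0 x3 + x1 x2, x0 x2 + x1 x3 + x2 x3, x0 + x1 + x2 + x3)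
   (products are min, sums are max), which a finite check shows to be
   adjacency-preserving.  Maps of cubebar never lower the dimension, so an
   endomorphism of [4] in cubebar is a composite of sigma's and gamma's; these
   6264 composites are enumerated, with a certified closure test, and f0 is not
   among them.
   Every map [0] -> [n] lies in cubebar, and so does every map [1] -> [n] whose
   two values form a covering pair.  Maps of cubebar and adjacency-preserving
   maps both preserve covering pairs, so composing with f0 is a morphism of the
   1-truncations of cubebar[4].  Shell-completeness would make it composition
   with some f in cubebar; f agrees with f0 on points, hence f = f0. *)

Lemma coord_mk n (F : nat -> bool) k : coord (mkcube n F) k = (k < n) && F k.
Proof.
by rewrite /coord; case: insubP => [j kn <-|/negbTE-> //]; rewrite ffunE ltn_ord.
Qed.

Lemma coordE n (x : cube n) (j : 'I_n) : coord x j = x j.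
Proof. by rewrite /coord valK. Qed.

Lemma coord_out n (x : cube n) k : n <= k -> coord x k = false.
Proof. by move=> nk; rewrite /coord insubN // -leqNgt. Qed.

Lemma cube_ext n (x y : cube n) : (forall k, k < n -> coord x k = coord y k) -> x = y.
Proof. by move=> xy; apply/ffunP=> j; rewrite -!coordE xy. Qed.

Lemma compE l m n (g : hom m n) (f : hom l m) x : comp g f x = g (f x).
Proof. by rewrite ffunE. Qed.

Lemma comp_idh m n (f : hom m n) : comp f (idh m) = f.
Proof. by apply/ffunP=> x; rewrite compE ffunE. Qed.

Lemma idh_comp m n (f : hom m n) : comp (idh n) f = f.
Proof. by apply/ffunP=> x; rewrite compE ffunE. Qed.

Lemma compA k l m n (h : hom m n) (g : hom l m) (f : hom k l) :
  comp (comp h g) f = comp h (comp g f).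
Proof. by apply/ffunP=> x; rewrite !compE. Qed.

Lemma coord_delta n i a (x : cube n) k : i <= n ->
  coord (delta n i a x) k = if k == i then a else coord x (unbump i k).
Proof.
move=> iln; rewrite ffunE coord_mk /unbump.
case: (ltngtP k i) => [ki|ik|->].
- by rewrite subn0 ltnS (leq_trans (ltnW ki)).
- by rewrite subn1; case: ltnP => //= nk; rewrite coord_out //; lia.
- by rewrite ltnS iln.
Qed.

Definition transpn k j : nat := if j == k then k.+1 else if j == k.+1 then k else j.

Lemma transpnK k : involutive (transpn k).
Proof. by move=> j; rewrite /transpn; do ![case: eqP => //]; try lia. Qed.

Lemma coord_sigma n k (x : cube n) j : k.+1 < n ->
  coord (sigma n k x) j = coord x (transpn k j).
Proof.
move=> kn; rewrite ffunE coord_mk /transpn !(fun_if (coord x)).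
have [//|nj] := ltnP j n.
by rewrite !ifN ?coord_out //; apply/eqP; lia.
Qed.

Lemma coord_gamma n k (x : cube n) j : k.+1 < n ->
  coord (gamma n k x) j = if j == k then coord x k || coord x k.+1
    else if j == k.+1 then coord x k && coord x k.+1 else coord x j.
Proof.
move=> kn; rewrite ffunE coord_mk; have [//|nj] := ltnP j n.
by rewrite !ifN ?coord_out //; apply/eqP; lia.
Qed.

Definition covers n (x y : cube n) : Prop := exists j,
  [/\ coord x j = false, coord y j = true & forall i, i != j -> coord x i = coord y i].

Lemma covers_delta n i a (x y : cube n) : i <= n ->
  covers x y -> covers (delta n i a x) (delta n i a y).
Proof.
move=> iln [j [xj yj xy]]; exists (bump i j).
have bji : (bump i j == i) = false by apply/negbTE; rewrite eq_sym neq_bump.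
rewrite !coord_delta // bji bumpK; split=> // l lj; rewrite !coord_delta //.
case: eqP => // /eqP li; apply: xy; apply: contra lj => /eqP <-.
by rewrite unbumpKcond (negbTE li).
Qed.

Lemma covers_sigma n k (x y : cube n) : k.+1 < n ->
  covers x y -> covers (sigma n k x) (sigma n k y).
Proof.
move=> kn [j [xj yj xy]]; exists (transpn k j); rewrite !coord_sigma // transpnK.
split=> // l lj; rewrite !coord_sigma //; apply: xy.
by apply: contra lj => /eqP <-; rewrite transpnK.
Qed.

Lemma covers_gamma n k (x y : cube n) : k.+1 < n ->
  covers x y -> covers (gamma n k x) (gamma n k y).
Proof.
move=> kn [j [xj yj xy]].
have [jk | /norP [/negbTE jk /negbTE jk1]] := boolP ((j == k) || (j == k.+1)); last first.
  have [xk xk1] : coord x k = coord y k /\ coord x k.+1 = coord y k.+1.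
    by split; apply: xy; rewrite eq_sym ?jk ?jk1.
  exists j; rewrite !coord_gamma // jk jk1; split=> // l lj.
  by rewrite !coord_gamma // xk xk1; do 2!case: ifP => // _; apply: xy.
have far l : l != k -> l != k.+1 -> coord (gamma n k x) l = coord (gamma n k y) l.
  move=> lk lk1; rewrite !coord_gamma // (negbTE lk) (negbTE lk1); apply: xy.
  by case/orP: jk => /eqP ->.
have gk z : coord (gamma n k z) k = coord z k || coord z k.+1.
  by rewrite coord_gamma // eqxx.
have gk1 z : coord (gamma n k z) k.+1 = coord z k && coord z k.+1.
  by rewrite coord_gamma // eqxx ifN //; lia.
(* On the pair (k, k.+1) gamma sorts two bits; the flipped bit moves to position
   k.+1 exactly when the other bit of the pair is set. *)
case/orP: jk => /eqP ej; subst j; [have e : coord x k.+1 = coord y k.+1 |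
  have e : coord x k = coord y k]; try by apply: xy; lia.
all: case b: (coord y _) in e; [exists k.+1 | exists k].
all: split=> [|| l]; rewrite ?gk ?gk1 ?xj ?yj ?e ?b //.
all: have [->|lk] := eqVneq l k; first by rewrite !gk ?xj ?yj ?e ?b ?eqxx.
all: have [->|lk1] := eqVneq l k.+1; last by move=> _; apply: far.
all: by rewrite !gk1 ?xj ?yj ?e ?b ?eqxx.
Qed.

Lemma cubebar_covers m n (f : hom m n) :
  cubebar f -> forall x y, covers x y -> covers (f x) (f y).
Proof.
elim=> {m n f} [n | l m n g f _ IHg _ IHf | n i a | n k | n k] x y xy.
- by rewrite !ffunE.
- by rewrite !compE; apply/IHg/IHf.
- exact: covers_delta.
- exact: covers_sigma.
- exact: covers_gamma.
Qed.

Lemma covers_adjacent n (x y : cube n) :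
  covers x y <-> cube_lt x y /\ hamming x y = 1.
Proof.
split=> [[j [xj yj xy]] | [/andP [_ /forallP le_xy] /eqP /cards1P [J dJ]]].
  have jn : j < n by rewrite ltnNge; apply: contraTN yj => /coord_out ->.
  pose J := Ordinal jn.
  have xyJ (i : 'I_n) : (x i != y i) = (i == J).
    have [->|iJ] := eqVneq i J; first by rewrite -!coordE xj yj.
    by rewrite -!coordE xy ?eqxx.
  split.
    apply/andP; split; first by apply/eqP=> exy; move: xj; rewrite exy yj.
    apply/forallP=> i; have := xyJ i; have [->|_] := eqVneq i J.
      by rewrite -coordE xj.
    by move/negbFE/eqP ->; rewrite implybb.
  rewrite /hamming (_ : [set _ | _] = [set J]) ?cards1 //.
  by apply/setP=> i; rewrite !inE xyJ.
have xyJ i : (x i != y i) = (i == J) by rewrite -in_set1 -dJ inE.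
have [xJ yJ] : x J = false /\ y J = true.
  by move: (le_xy J) (xyJ J); rewrite eqxx; case: (x J); case: (y J).
exists J; rewrite !coordE xJ yJ; split=> // i iJ.
have [ilt|ni] := ltnP i n; last by rewrite !coord_out.
have := xyJ (Ordinal ilt); rewrite -!coordE -val_eqE /= (negbTE iJ).
by move/negbFE/eqP.
Qed.

Lemma adjacency_preserving_covers m n (f : hom m n) x y :
  adjacency_preserving f -> covers x y -> covers (f x) (f y).
Proof.
by move=> [lt_f adj_f] /covers_adjacent [/lt_f ? /adj_f ?]; apply/covers_adjacent.
Qed.

Lemma unbump_lt n i l : i <= n -> l < n.+1 -> l != i -> unbump i l < n.
Proof. by move=> iln ln li; rewrite /unbump; case: ltnP => /= il; lia. Qed.

Definition drop_coord k n (i : nat) (v : hom k n.+1) : hom k n :=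
  [ffun z => mkcube n (fun l => coord (v z) (bump i l))].

Lemma coord_drop_coord k n i (v : hom k n.+1) z l :
  coord (drop_coord i v z) l = (l < n) && coord (v z) (bump i l).
Proof. by rewrite ffunE coord_mk. Qed.

Lemma delta_drop_coord k n i a (v : hom k n.+1) : i <= n ->
  (forall z, coord (v z) i = a) -> v = comp (delta n i a) (drop_coord i v).
Proof.
move=> iln va; apply/ffunP=> z; apply: cube_ext=> l ln.
rewrite compE coord_delta //; case: eqP => [->|/eqP li]; first by rewrite va.
by rewrite coord_drop_coord unbumpKcond (negbTE li) add0n unbump_lt.
Qed.

Lemma cube0_eq (x y : cube 0) : x = y.
Proof. by apply/ffunP; case. Qed.

Lemma cubebar_hom0 n (v : hom 0 n) : cubebar v.
Proof.
elim: n v => [|n IHn] v.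
  suff -> : v = idh 0 by apply: cb_id.
  by apply/ffunP=> z; apply: cube0_eq.
have x0 : cube 0 := [ffun=> false].
rewrite (@delta_drop_coord _ _ n (coord (v x0) n) v) //.
  by apply: cb_comp; [apply: cb_delta | apply: IHn].
by move=> z; rewrite (cube0_eq z x0).
Qed.

Definition e0 : cube 1 := mkcube 1 (fun _ => false).
Definition e1 : cube 1 := mkcube 1 (fun _ => true).

Lemma cube1_cases (z : cube 1) : z = e0 \/ z = e1.
Proof.
by case z0: (coord z 0); [right | left]; apply: cube_ext=> k;
  rewrite ltnS leqn0 => /eqP ->; rewrite coord_mk z0.
Qed.

Lemma covers_e0e1 : covers e0 e1.
Proof. by exists 0; rewrite /e0 /e1; split=> [||[|i] // _]; rewrite !coord_mk. Qed.

Lemma cubebar_edge n (v : hom 1 n) : covers (v e0) (v e1) -> cubebar v.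
Proof.
elim: n v => [|n IHn] v [j [xj yj xy]]; first by rewrite coord_out in yj.
have jn : j < n.+1 by rewrite ltnNge; apply: contraTN yj => /coord_out ->.
case: n IHn v jn xj yj xy => [|n] IHn v jn xj yj xy.
  have j0 : j = 0 by lia.
  subst j; suff -> : v = idh 1 by apply: cb_id.
  apply/ffunP=> z; rewrite ffunE; apply: cube_ext=> l l1.
  have -> : l = 0 by lia.
  by case: (cube1_cases z) => ->; rewrite ?xj ?yj coord_mk.
(* Drop a coordinate other than the moving one j; one of 0 and n.+1 will do. *)
pose i := if j == 0 then n.+1 else 0.
have iln : i <= n.+1 by rewrite /i; case: ifP.
have ji : j != i by rewrite /i; case: (eqVneq j 0) => [->|].
have vi z : coord (v z) i = coord (v e0) i.
  by case: (cube1_cases z) => -> //; rewrite xy // eq_sym.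
rewrite (delta_drop_coord iln vi); apply: cb_comp; first exact: cb_delta.
apply: IHn; exists (unbump i j).
rewrite !coord_drop_coord unbump_lt // unbumpKcond (negbTE ji) add0n.
split=> // l lj; rewrite !coord_drop_coord xy //.
by apply: contra lj => /eqP <-; rewrite bumpK.
Qed.

Lemma hom_eq_points n p (f g : hom n p) :
  (forall u : hom 0 n, comp f u = comp g u) -> f = g.
Proof.
move=> fg; apply/ffunP=> x.
have := congr1 (fun w : hom 0 p => w [ffun=> false]) (fg [ffun=> x]).
by rewrite !compE !ffunE.
Qed.

Lemma cubebar_dim m n (f : hom m n) : cubebar f -> m <= n.
Proof. by elim=> {m n f} // l m n g f _ lemn _ lelm; apply: leq_trans lelm lemn. Qed.

Section EndomorphismInvariant.

Variables (l : nat) (P : forall m, hom l m -> Prop).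
Hypothesis P_sigma : forall m k h, k.+1 < m -> P h -> P (comp (sigma m k) h).
Hypothesis P_gamma : forall m k h, k.+1 < m -> P h -> P (comp (gamma m k) h).

Lemma cubebar_endo_invariant m n (f : hom m n) :
  cubebar f -> m = n -> forall h, P h -> P (comp f h).
Proof.
elim=> {m n f} [n _ h | k m n g f cb_g IHg cb_f IHf ekn h | n i a ein | n k kn _ | n k kn _].
- by rewrite idh_comp.
- have ekm : k = m.
    by apply/eqP; rewrite eqn_leq (cubebar_dim cb_f) ekn (cubebar_dim cb_g).
  by subst k; rewrite compA => Ph; apply: IHg => //; apply: IHf.
- by move: ein; lia.
- by move=> h; apply: P_sigma.
- by move=> h; apply: P_gamma.
Qed.

End EndomorphismInvariant.

Definition B4 := (bool * bool * bool * bool)%type.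

Definition bit (b : B4) (k : nat) : bool :=
  let: (b0, b1, b2, b3) := b in nth false [:: b0; b1; b2; b3] k.
Definition mk4 (E : nat -> bool) : B4 := (E 0, E 1, E 2, E 3).

Definition to_b4 (x : cube 4) : B4 := mk4 (coord x).
Definition of_b4 (b : B4) : cube 4 := mkcube 4 (bit b).

Lemma bit_out b k : 4 <= k -> bit b k = false.
Proof. by case: b => [[[b0 b1] b2] b3] k4; rewrite /bit nth_default. Qed.

Lemma coord_of_b4 b k : coord (of_b4 b) k = bit b k.
Proof. by rewrite coord_mk; case: ltnP => // /bit_out ->. Qed.

Lemma to_b4K : cancel to_b4 of_b4.
Proof.
move=> x; apply: cube_ext=> k k4; rewrite coord_of_b4.
by do 4!case: k k4 => [|k] k4 //.
Qed.

Lemma of_b4K : cancel of_b4 to_b4.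
Proof. by case=> [[[b0 b1] b2] b3]; rewrite /to_b4 /mk4 !coord_of_b4. Qed.

Lemma bit_to_b4 x k : bit (to_b4 x) k = coord x k.
Proof. by rewrite -{2}(to_b4K x) coord_of_b4. Qed.

Definition act_b4 (f : hom 4 4) (b : B4) : B4 := to_b4 (f (of_b4 b)).

Lemma act_b4_comp g h b : act_b4 (comp g h) b = act_b4 g (act_b4 h b).
Proof. by rewrite /act_b4 compE to_b4K. Qed.

Lemma act_b4_idh b : act_b4 (idh 4) b = b.
Proof. by rewrite /act_b4 ffunE of_b4K. Qed.

Definition sigma_b4 k (b : B4) : B4 := mk4 (fun j => bit b (transpn k j)).
Definition gamma_b4 k (b : B4) : B4 := mk4 (fun j =>
  if j == k then bit b k || bit b k.+1
  else if j == k.+1 then bit b k && bit b k.+1 else bit b j).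

Lemma act_b4_sigma k : k.+1 < 4 -> act_b4 (sigma 4 k) =1 sigma_b4 k.
Proof. by move=> k4 b; rewrite /act_b4 /to_b4 /mk4 !coord_sigma // !coord_of_b4. Qed.

Lemma act_b4_gamma k : k.+1 < 4 -> act_b4 (gamma 4 k) =1 gamma_b4 k.
Proof. by move=> k4 b; rewrite /act_b4 /to_b4 /mk4 !coord_gamma // !coord_of_b4. Qed.

Definition le_b4 (a b : B4) : bool := all (fun j => bit a j ==> bit b j) (iota 0 4).
Definition hamming_b4 (a b : B4) : nat := count (fun j => bit a j != bit b j) (iota 0 4).

Lemma card_count n (P : pred 'I_n) : #|P| = count P (enum 'I_n).
Proof. by rewrite enumT cardE /enum_mem size_filter. Qed.

Lemma hamming_to_b4 x y : hamming x y = hamming_b4 (to_b4 x) (to_b4 y).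
Proof.
rewrite /hamming cardsE card_count /hamming_b4 -val_enum_ord count_map.
by apply: eq_count=> i; rewrite -!coordE -!bit_to_b4.
Qed.

Lemma cube_le_to_b4 x y : cube_le x y = le_b4 (to_b4 x) (to_b4 y).
Proof.
rewrite /le_b4 -val_enum_ord all_map; apply/forallP/allP=> [le_xy i _ | le_xy i].
  by have := le_xy i; rewrite -!coordE -!bit_to_b4.
by have := le_xy i (mem_enum _ i); rewrite -!coordE -!bit_to_b4.
Qed.

Lemma cube_lt_to_b4 x y :
  cube_lt x y = (to_b4 x != to_b4 y) && le_b4 (to_b4 x) (to_b4 y).
Proof. by rewrite /cube_lt cube_le_to_b4 (can_eq to_b4K). Qed.

Definition all_b4 : seq B4 :=
  [seq (p, b) | p <- [seq (q, b) | q <- [seq (b0, b1) | b0 <- [:: false; true],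
     b1 <- [:: false; true]], b <- [:: false; true]], b <- [:: false; true]].

Lemma mem_all_b4 b : b \in all_b4.
Proof. by case: b => [[[[] []] []] []]. Qed.

(* Endomaps of B4 are stored as their tables of values along [all_b4]; [rank_b4 y]
   is the position of [y] in [all_b4], so tables compose without searching. *)
Definition rank_b4 (b : B4) : nat :=
  let: (b0, b1, b2, b3) := b in 8 * b0 + 4 * b1 + 2 * b2 + b3.
Definition table (F : B4 -> B4) : seq B4 := map F all_b4.
Definition tcomp (T U : seq B4) : seq B4 := [seq nth y T (rank_b4 y) | y <- U].

Lemma eq_table F G : F =1 G -> table F = table G.
Proof. by move=> FG; rewrite /table (eq_map FG). Qed.

Lemma nth_table F y : nth y (table F) (rank_b4 y) = F y.
Proof. by case: y => [[[[] []] []] []]. Qed.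

Lemma tcomp_table F G : tcomp (table F) (table G) = table (F \o G).
Proof. by rewrite /tcomp /table -map_comp; apply: eq_map=> b /=; rewrite nth_table. Qed.

Lemma table_act_b4_comp g h :
  table (act_b4 (comp g h)) = tcomp (table (act_b4 g)) (table (act_b4 h)).
Proof. by rewrite tcomp_table; apply: eq_map=> b; apply: act_b4_comp. Qed.

Definition push (b : bool) (p : positive) : positive := if b then xI p else xO p.
Fixpoint code (c : seq B4) : positive :=
  if c is (b0, b1, b2, b3) :: c' then push b0 (push b1 (push b2 (push b3 (code c'))))
  else xH.
Fixpoint bits_of (p : positive) : seq bool :=
  match p with xH => [::] | xI q => true :: bits_of q | xO q => false :: bits_of q end.
Fixpoint chunks (s : seq bool) : seq B4 :=
  if s is [:: b0, b1, b2, b3 & s'] then (b0, b1, b2, b3) :: chunks s' else [::].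
Definition decode (p : positive) : seq B4 := chunks (bits_of p).

Lemma codeK : cancel code decode.
Proof.
rewrite /decode; elim=> [|[[[b0 b1] b2] b3] c IH] //=.
by case: b0; case: b1; case: b2; case: b3; rewrite /= IH.
Qed.

Definition closure_step gens (t : PositiveSet.t) : PositiveSet.t :=
  PositiveSet.fold (fun p acc =>
    foldr (fun G => PositiveSet.add (code (tcomp G (decode p)))) acc gens) t t.
Definition closed_under gens (t : PositiveSet.t) : bool :=
  PositiveSet.for_all (fun p =>
    all (fun G => PositiveSet.mem (code (tcomp G (decode p))) t) gens) t.

Lemma closed_under_mem gens t c G : closed_under gens t -> G \in gens ->
  PositiveSet.mem (code c) t -> PositiveSet.mem (code (tcomp G c)) t.
Proof.
move=> /PositiveSet.for_all_spec cl gG /PositiveSet.mem_spec ct.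
have /allP all_t : all (fun G => PositiveSet.mem (code (tcomp G c)) t) gens.
  by rewrite -{1}(codeK c); apply: (cl _ _ ct) => p q ->.
exact: all_t.
Qed.

Definition generator_tables : seq (seq B4) :=
  [seq table (sigma_b4 k) | k <- iota 0 3] ++ [seq table (gamma_b4 k) | k <- iota 0 3].

Lemma generator_tables_sigma k : k < 3 -> table (sigma_b4 k) \in generator_tables.
Proof.
move=> k3; rewrite mem_cat; apply/orP; left.
by apply: (map_f (fun j => table (sigma_b4 j))); rewrite mem_iota.
Qed.

Lemma generator_tables_gamma k : k < 3 -> table (gamma_b4 k) \in generator_tables.
Proof.
move=> k3; rewrite mem_cat; apply/orP; right.
by apply: (map_f (fun j => table (gamma_b4 j))); rewrite mem_iota.
Qed.

Definition f0_b4 (b : B4) : B4 :=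
  let: (x0, x1, x2, x3) := b in
  (x0 && x1 && x2 && x3, x0 && x1 || x0 && x3 || x1 && x2,
   x0 && x2 || x1 && x3 || x2 && x3, x0 || x1 || x2 || x3).

Definition f0 : hom 4 4 := [ffun x => of_b4 (f0_b4 (to_b4 x))].

Lemma to_b4_f0 x : to_b4 (f0 x) = f0_b4 (to_b4 x).
Proof. by rewrite ffunE of_b4K. Qed.

Lemma act_b4_f0 : act_b4 f0 =1 f0_b4.
Proof. by move=> b; rewrite /act_b4 to_b4_f0 of_b4K. Qed.

(* 13 rounds of [closure_step] from the identity reach all 6264 composites of the
   sigma_i and gamma_i on [4]; only the closure test matters for soundness. *)
Definition sigma_gamma_codes : PositiveSet.t :=
  iter 13 (closure_step generator_tables) (PositiveSet.singleton (code all_b4)).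

Lemma sigma_gamma_certificate : exists t, [&& closed_under generator_tables t,
  PositiveSet.mem (code all_b4) t & ~~ PositiveSet.mem (code (table f0_b4)) t].
Proof. by exists sigma_gamma_codes; vm_compute. Qed.

Section Certificate.

Variable t : PositiveSet.t.
Hypothesis t_closed : closed_under generator_tables t.

(* Stated for every codomain [m], as [cubebar_endo_invariant] requires; it only
   says something when [m = 4]. *)
Definition coded_in m (h : hom 4 m) : Prop :=
  forall e : m = 4, PositiveSet.mem (code (table (act_b4 (ecast m (hom 4 m) e h)))) t.

Lemma coded_in_sigma m k (h : hom 4 m) :
  k.+1 < m -> coded_in h -> coded_in (comp (sigma m k) h).
Proof.
move=> km hS e; subst m; rewrite table_act_b4_comp (eq_table (act_b4_sigma km)).
exact: closed_under_mem t_closed (generator_tables_sigma km) (hS erefl).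
Qed.

Lemma coded_in_gamma m k (h : hom 4 m) :
  k.+1 < m -> coded_in h -> coded_in (comp (gamma m k) h).
Proof.
move=> km hS e; subst m; rewrite table_act_b4_comp (eq_table (act_b4_gamma km)).
exact: closed_under_mem t_closed (generator_tables_gamma km) (hS erefl).
Qed.

End Certificate.

Lemma f0_not_cubebar : ~ cubebar f0.
Proof.
case: sigma_gamma_certificate => t /and3P [t_closed id_t f0_t] cb_f0.
have id_coded : coded_in t (idh 4).
  move=> e; rewrite (eq_axiomK e).
  by have -> : table (act_b4 (idh 4)) = all_b4 by rewrite (eq_table act_b4_idh) /table map_id.
have f0_coded := cubebar_endo_invariant (coded_in_sigma t_closed) (coded_in_gamma t_closed)
  cb_f0 erefl id_coded erefl.
have : PositiveSet.mem (code (table (act_b4 (comp f0 (idh 4))))) t := f0_coded.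
by rewrite comp_idh (eq_table act_b4_f0); apply/negP.
Qed.

Lemma f0_b4_adjacent : all (fun a => all (fun b =>
    ((a != b) && le_b4 a b ==> (f0_b4 a != f0_b4 b) && le_b4 (f0_b4 a) (f0_b4 b)) &&
    ((hamming_b4 a b == 1) ==> (hamming_b4 (f0_b4 a) (f0_b4 b) == 1))) all_b4) all_b4.
Proof. by vm_compute. Qed.

Lemma f0_adjacency_preserving : adjacency_preserving f0.
Proof.
have f0_ab a b := allP (allP f0_b4_adjacent a (mem_all_b4 a)) b (mem_all_b4 b).
split=> x y; rewrite ?cube_lt_to_b4 ?hamming_to_b4 !to_b4_f0.
  by case/andP: (f0_ab (to_b4 x) (to_b4 y)) => /implyP.
by case/andP: (f0_ab (to_b4 x) (to_b4 y)) => _ /implyP f0_ham /eqP /f0_ham /eqP.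
Qed.

Lemma f0_shell_transf : shell_transf cubebar (fun k (u : hom k 4) => comp f0 u).
Proof.
split=> [k u | j k e u _ _ _ _]; last by rewrite compA.
case: k u => [|[|//]] u _ cb_u; first exact: cubebar_hom0.
apply: cubebar_edge; rewrite !compE.
apply: adjacency_preserving_covers f0_adjacency_preserving _.
exact: cubebar_covers cb_u _ _ covers_e0e1.
Qed.

Theorem theorem7p16 :
  ~ shell_complete cubebar /\
  exists m n (f : hom m n), adjacency_preserving f /\ ~ cubebar f.
Proof.
split.
  move=> shell_cplt; have [_ /(_ _ f0_shell_transf) [f cb_f f0_f]] := shell_cplt 4 4 isT.
  suff f0E : f0 = f by apply: f0_not_cubebar; rewrite f0E.
  by apply: hom_eq_points => u; apply: f0_f; last exact: cubebar_hom0.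
by exists 4, 4, f0; split; [exact: f0_adjacency_preserving | exact: f0_not_cubebar].
Qed.
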